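(* Let $\alpha$ be an ordinal and let $X$ be a metric space expressed as a union $X=\bigcup_{i\in I}X_i$. Suppose that $\{X_i\}_{i\in I}\in\mathfrak{C}_\alpha$ and that for every $r>0$ there is a subspace $Y(r)\subset X$ with $\{Y(r)\}\in\mathfrak{C}_\alpha$ such that the collection $\{X_i\setminus Y(r)\}_{i\in I}$ is $r$-disjoint. Then $\{X\}\in\mathfrak{C}_{\alpha+1}$.
   Context: A family $\mathcal{U}$ of metric subspaces of a metric space $(X,d)$ is $r$-disjoint if $d(x,y)>r$ whenever $x\in U$, $y\in U'$, $U\neq U'$ in $\mathcal{U}$. For families $\mathcal{X},\mathcal{Y}$ and $R\in\mathbb{R}^{\mathbb{N}}$, $\mathcal{X}\xrightarrow{R}\mathcal{Y}$ means: there is an integer $k$ such that for each $X\in\mathcal{X}$ there are subcollections $\mathcal{U}_1,\dots,\mathcal{U}_k\subseteq\mathcal{Y}$ of subspaces of $X$, each $\mathcal{U}_i$ being $R_i$-disjoint, with $\bigcup_i\mathcal{U}_i$ covering $X$. A family is bounded if the diameters of its members are uniformly bounded. $\mathfrak{C}_0$ is the class of bounded families; for an ordinal $\alpha>0$, $\mathfrak{C}_\alpha$ is the class of families $\mathcal{X}$ such that for every $R\in\mathbb{R}^{\mathbb{N}}$ there exist $\beta<\alpha$ and $\mathcal{Y}\in\mathfrak{C}_\beta$ with $\mathcal{X}\xrightarrow{R}\mathcal{Y}$. All subspaces carry the induced metric. *)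

From Stdlib Require Import Reals.
Open Scope R_scope.

Definition is_metric {M : Type} (d : M -> M -> R) : Prop :=
  (forall x y, 0 <= d x y) /\
  (forall x y, d x y = 0 <-> x = y) /\
  (forall x y, d x y = d y x) /\
  (forall x y z, d x z <= d x y + d y z).

(* Subspaces of the metric space (M,d) are subsets of M (induced metric);
   a family of subspaces is a set of subsets. *)
Definition subspace (M : Type) := M -> Prop.
Definition family (M : Type) := subspace M -> Prop.

Definition r_disjoint {M : Type} (d : M -> M -> R) (r : R) (F : family M) : Prop :=
  forall (U U' : subspace M) (x y : M),
    F U -> F U' -> U <> U' -> U x -> U' y -> d x y > r.

Definition bounded_family {M : Type} (d : M -> M -> R) (F : family M) : Prop :=
  exists D : R, forall (U : subspace M) (x y : M), F U -> U x -> U y -> d x y <= D.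

Definition arrow {M : Type} (d : M -> M -> R)
  (FX : family M) (Rs : nat -> R) (FY : family M) : Prop :=
  exists k : nat, forall X : subspace M, FX X ->
    exists Us : nat -> family M,
      (forall i, (1 <= i <= k)%nat ->
         (forall U, Us i U -> FY U) /\
         (forall U, Us i U -> forall x, U x -> X x) /\
         r_disjoint d (Rs i) (Us i)) /\
      (forall x, X x -> exists i U, (1 <= i <= k)%nat /\ Us i U /\ U x).

(* Ordinals are represented as elements of a well-ordered type (T, lt).
   The classes 𝔆_a are defined by (well-founded) recursion on a:
   𝔆_a = bounded families if a is the least ordinal (0);
   otherwise 𝔆_a = families 𝒳 such that for every R there are b < a and
   𝒴 ∈ 𝔆_b with 𝒳 -R-> 𝒴.  Since lt is well-founded, the inductive
   (least fixed point) reading coincides with the recursive definition. *)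
Definition well_order {T : Type} (lt : T -> T -> Prop) : Prop :=
  well_founded lt /\
  (forall a b c, lt a b -> lt b c -> lt a c) /\
  (forall a b, lt a b \/ a = b \/ lt b a).

Inductive Cls {M : Type} (d : M -> M -> R) {T : Type} (lt : T -> T -> Prop)
  : T -> family M -> Prop :=
| Cls_zero : forall (a : T) (F : family M),
    (forall b, ~ lt b a) -> bounded_family d F -> Cls d lt a F
| Cls_step : forall (a : T) (F : family M),
    (exists b, lt b a) ->
    (forall Rs : nat -> R, exists b, lt b a /\
        exists G : family M, Cls d lt b G /\ arrow d F Rs G) ->
    Cls d lt a F.

Definition single {M : Type} (A : subspace M) : family M := fun U => U = A.

Definition fam_of {M I : Type} (Xs : I -> subspace M) : family M :=
  fun U => exists i, U = Xs i.

(* Cover the whole space by the two families (X_i \ Y(r))_i and {Y(r)}, with r at least the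
   first entry of the given sequence R: the first is r-disjoint by hypothesis and the second
   is trivially disjoint, so {X} -R-> (X_i \ Y(r))_i ∪ {Y(r)} with k = 2.  The target family
   refines {X_i} ∪ {Y(r)}, and C_α is closed under such refined unions (by well-founded
   induction on α, restricting the covers of the larger pieces to the smaller ones), so it
   lies in C_α and {X} ∈ C_(α+1). *)
From Stdlib Require Import Reals Lia Lra Classical.
Open Scope R_scope.

Section Families.

Context {M : Type} (d : M -> M -> R).

Definition fam_union (F G : family M) : family M := fun U => F U \/ G U.

Definition subsets_of (G : family M) : family M :=
  fun U => exists V, G V /\ forall x, U x -> V x.

Definition refines (F G : family M) : Prop := forall U, F U -> subsets_of G U.

Definition arrow_witness (X : subspace M) (Rs : nat -> R) (G : family M) (k : nat)
    (Us : nat -> family M) : Prop :=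
  (forall i, (1 <= i <= k)%nat ->
     (forall U, Us i U -> G U) /\
     (forall U, Us i U -> forall x, U x -> X x) /\
     r_disjoint d (Rs i) (Us i)) /\
  (forall x, X x -> exists i U, (1 <= i <= k)%nat /\ Us i U /\ U x).

Lemma refines_subsets_of (G : family M) : refines (subsets_of G) G.
Proof. intros U HU; exact HU. Qed.

Lemma r_disjoint_single (r : R) (A : subspace M) : r_disjoint d r (single A).
Proof. intros U U' x y HU HU' Hne; unfold single in *; congruence. Qed.

Lemma r_disjoint_le (r r' : R) (F : family M) :
  r' <= r -> r_disjoint d r F -> r_disjoint d r' F.
Proof.
  intros Hle Hdis U U' x y HU HU' Hne Ux Uy.
  specialize (Hdis U U' x y HU HU' Hne Ux Uy); lra.
Qed.

Lemma bounded_family_refines (F F1 F2 : family M) :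
  bounded_family d F1 -> bounded_family d F2 -> refines F (fam_union F1 F2) ->
  bounded_family d F.
Proof.
  intros [D1 HD1] [D2 HD2] HF. exists (Rmax D1 D2).
  intros U x y HU Ux Uy. destruct (HF U HU) as [V [[HV | HV] Hsub]].
  - apply Rle_trans with D1; [apply (HD1 V); auto | apply Rmax_l].
  - apply Rle_trans with D2; [apply (HD2 V); auto | apply Rmax_r].
Qed.

Lemma arrow_witness_incl X Rs (G G' : family M) k Us :
  (forall U, G U -> G' U) -> arrow_witness X Rs G k Us -> arrow_witness X Rs G' k Us.
Proof.
  intros HG [HUs Hcov]. split; [|exact Hcov].
  intros i Hi. destruct (HUs i Hi) as [HinG HR]. split; auto.
Qed.

Lemma arrow_witness_widen X Rs G k k' Us :
  (k <= k')%nat -> arrow_witness X Rs G k Us ->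
  arrow_witness X Rs G k' (fun i U => (i <= k)%nat /\ Us i U).
Proof.
  intros Hk [HUs Hcov]. split.
  - intros i Hi. destruct (Nat.le_gt_cases i k) as [Hik | Hki].
    + destruct (HUs i (conj (proj1 Hi) Hik)) as [HG [HX Hdis]].
      split; [|split].
      * intros U [_ HU]; exact (HG U HU).
      * intros U [_ HU]; exact (HX U HU).
      * intros U U' x y [_ HU] [_ HU']; exact (Hdis U U' x y HU HU').
    + split; [|split]; [intros U [Hik HU] .. | intros U U' x y [Hik HU]]; lia.
  - intros x Hx. destruct (Hcov x Hx) as [i [U [Hi [HU Ux]]]].
    exists i, U. repeat split; auto; lia.
Qed.

Lemma arrow_witness_restrict X V Rs G k Us :
  (forall x, X x -> V x) -> arrow_witness V Rs G k Us ->
  arrow_witness X Rs (subsets_of G) k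
    (fun i U => exists W, Us i W /\ U = fun x => W x /\ X x).
Proof.
  intros Hsub [HUs Hcov]. split.
  - intros i Hi. destruct (HUs i Hi) as [HG [_ Hdis]]. split; [|split].
    + intros U [W [HW ->]]. exists W. split; [exact (HG W HW) | tauto].
    + intros U [W [_ ->]] x [_ Hx]; exact Hx.
    + intros U U' x y [W [HW ->]] [W' [HW' ->]] Hne [Wx _] [W'y _].
      apply (Hdis W W'); auto. intros ->; apply Hne; reflexivity.
  - intros x Hx. destruct (Hcov x (Hsub x Hx)) as [i [W [Hi [HW Wx]]]].
    exists i, (fun z => W z /\ X z). split; [exact Hi|]. split; [exists W; auto | auto].
Qed.

Lemma arrow_refines_union (F F1 F2 G1 G2 : family M) Rs :
  arrow d F1 Rs G1 -> arrow d F2 Rs G2 -> refines F (fam_union F1 F2) ->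
  arrow d F Rs (subsets_of (fam_union G1 G2)).
Proof.
  intros [k1 Hk1] [k2 Hk2] HF. exists (Nat.max k1 k2). intros X HX.
  destruct (HF X HX) as [V [HV Hsub]].
  assert (Hpiece : forall G k Us, (forall U, G U -> fam_union G1 G2 U) ->
            (k <= Nat.max k1 k2)%nat -> arrow_witness V Rs G k Us ->
            exists Us', arrow_witness X Rs (subsets_of (fam_union G1 G2)) (Nat.max k1 k2) Us').
  { intros G k Us HG Hk HUs.
    apply (arrow_witness_incl _ _ _ (fam_union G1 G2)) in HUs; [|exact HG].
    apply (arrow_witness_restrict X) in HUs; [|exact Hsub].
    apply (arrow_witness_widen _ _ _ _ (Nat.max k1 k2)) in HUs; [|exact Hk].
    eexists; exact HUs. }
  destruct HV as [HV | HV].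
  - destruct (Hk1 V HV) as [Us HUs].
    apply (Hpiece G1 k1 Us); [intros U HU; left; exact HU | lia | exact HUs].
  - destruct (Hk2 V HV) as [Us HUs].
    apply (Hpiece G2 k2 Us); [intros U HU; right; exact HU | lia | exact HUs].
Qed.

Lemma arrow_refl (F : family M) Rs : arrow d F Rs F.
Proof.
  exists 1%nat. intros X HX. exists (fun _ => single X). split.
  - intros i _. split; [|split].
    + intros U ->; exact HX.
    + intros U -> x Hx; exact Hx.
    + apply r_disjoint_single.
  - intros x Hx. exists 1%nat, X. unfold single; auto.
Qed.

Lemma arrow_single_two_pieces (X Y : subspace M) (F : family M) Rs :
  r_disjoint d (Rs 1%nat) F ->
  (forall U, F U -> forall x, U x -> X x) -> (forall x, Y x -> X x) ->
  (forall x, X x -> Y x \/ exists U, F U /\ U x) ->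
  arrow d (single X) Rs (fam_union F (single Y)).
Proof.
  intros Hdis HFX HYX Hcov. exists 2%nat. intros X' HX'. unfold single in HX'; subst X'.
  exists (fun i => if Nat.eqb i 1 then F else single Y). split.
  - intros i Hi. destruct (Nat.eqb_spec i 1) as [-> | _]; split; try split.
    + intros U HU; left; exact HU.
    + exact HFX.
    + exact Hdis.
    + intros U HU; right; exact HU.
    + intros U -> ; exact HYX.
    + apply r_disjoint_single.
  - intros x Hx. destruct (Hcov x Hx) as [Yx | [U [HU Ux]]].
    + exists 2%nat, Y. simpl. unfold single; repeat split; auto.
    + exists 1%nat, U. simpl. repeat split; auto.
Qed.

Context {T : Type} (lt : T -> T -> Prop).

Lemma Cls_lift (b c : T) (F : family M) : lt b c -> Cls d lt b F -> Cls d lt c F.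
Proof.
  intros Hbc HF. apply Cls_step; [exists b; exact Hbc|].
  intros Rs. exists b. split; [exact Hbc|]. exists F. split; [exact HF | apply arrow_refl].
Qed.

Hypotheses (lt_wf : well_founded lt) (lt_total : forall a b, lt a b \/ a = b \/ lt b a).

Lemma Cls_lift_common (b1 b2 : T) (F1 F2 : family M) :
  Cls d lt b1 F1 -> Cls d lt b2 F2 ->
  exists b, (b = b1 \/ b = b2) /\ Cls d lt b F1 /\ Cls d lt b F2.
Proof.
  intros H1 H2. destruct (lt_total b1 b2) as [Hlt | [<- | Hlt]].
  - exists b2. split; [right; reflexivity|]. split; [apply (Cls_lift b1) |]; auto.
  - exists b1. auto.
  - exists b1. split; [left; reflexivity|]. split; [| apply (Cls_lift b2)]; auto.
Qed.

Lemma Cls_refines_union (a : T) (F F1 F2 : family M) :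
  Cls d lt a F1 -> Cls d lt a F2 -> refines F (fam_union F1 F2) -> Cls d lt a F.
Proof.
  revert F F1 F2. induction a as [a IH] using (well_founded_ind lt_wf).
  intros F F1 F2 H1 H2 HF.
  destruct H1 as [a F1 Hmin1 Hbd1 | a F1 Hpos1 Hstep1];
    destruct H2 as [a F2 Hmin2 Hbd2 | a F2 Hpos2 Hstep2].
  - apply Cls_zero; [exact Hmin1 | apply (bounded_family_refines F F1 F2); auto].
  - destruct Hpos2 as [b Hb]; destruct (Hmin1 b Hb).
  - destruct Hpos1 as [b Hb]; destruct (Hmin2 b Hb).
  - apply Cls_step; [exact Hpos1|]. intros Rs.
    destruct (Hstep1 Rs) as [b1 [Hb1 [G1 [HG1 Harr1]]]].
    destruct (Hstep2 Rs) as [b2 [Hb2 [G2 [HG2 Harr2]]]].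
    destruct (Cls_lift_common b1 b2 G1 G2 HG1 HG2) as [b [Hb [HbG1 HbG2]]].
    assert (Hba : lt b a) by (destruct Hb as [-> | ->]; assumption).
    exists b. split; [exact Hba|]. exists (subsets_of (fam_union G1 G2)). split.
    + apply (IH b Hba _ G1 G2 HbG1 HbG2), refines_subsets_of.
    + apply (arrow_refines_union F F1 F2); assumption.
Qed.

End Families.

Theorem theorem4p1
  (T : Type) (lt : T -> T -> Prop) (Hwo : well_order lt)
  (a a1 : T) (Hsucc : forall b, lt b a1 <-> (lt b a \/ b = a))
  (M : Type) (d : M -> M -> R) (Hd : is_metric d)
  (I : Type) (Xs : I -> subspace M)
  (Hcover : forall x : M, exists i, Xs i x)
  (HXs : Cls d lt a (fam_of Xs))
  (Y : R -> subspace M)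
  (HY : forall r : R, r > 0 ->
     Cls d lt a (single (Y r)) /\
     r_disjoint d r (fam_of (fun i x => Xs i x /\ ~ Y r x))) :
  Cls d lt a1 (single (fun _ : M => True)).
Proof.
  destruct Hwo as [lt_wf [_ lt_total]].
  assert (Ha : lt a a1) by (apply Hsucc; right; reflexivity).
  apply Cls_step; [exists a; exact Ha|]. intros Rs. exists a. split; [exact Ha|].
  set (r := Rabs (Rs 1%nat) + 1).
  assert (Hr : r > 0) by (pose proof (Rabs_pos (Rs 1%nat)); unfold r; lra).
  destruct (HY r Hr) as [HYr Hdis].
  set (Xs_out := fam_of (fun i x => Xs i x /\ ~ Y r x)).
  exists (fam_union Xs_out (single (Y r))). split.
  - apply (Cls_refines_union d lt lt_wf lt_total a _ (fam_of Xs) (single (Y r)) HXs HYr).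
    intros U [[i ->] | ->].
    + exists (Xs i). split; [left; exists i; reflexivity | tauto].
    + exists (Y r). split; [right; reflexivity | auto].
  - apply arrow_single_two_pieces; auto.
    + apply (r_disjoint_le d r); [|exact Hdis].
      pose proof (Rle_abs (Rs 1%nat)); unfold r; lra.
    + intros x _. destruct (classic (Y r x)) as [Yx | nYx]; [left; exact Yx | right].
      destruct (Hcover x) as [i Xix]. exists (fun z => Xs i z /\ ~ Y r z).
      split; [exists i; reflexivity | auto].
Qed.
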